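(* Let $k$ be a field of characteristic $p>2$ ($p$ prime). For any $u,v,w\in k_1\langle X\rangle$, $$\kappa(u,v+w)\equiv\kappa(u,v)+\kappa(u,w)+\sum_{i=0}^{p-2}(i+1)^{-1}\binom{p-1}{i}[u,v^{i+1}w^{p-(i+1)}u^{p-1}]\pmod{T^{(3)}}.$$
   Context: $X=\{x_i\mid i\ge0\}$ is countably infinite; $k_1\langle X\rangle$ is the free unitary associative $k$-algebra on $X$. $[a,b]=ab-ba$, $[a,b,c]=[[a,b],c]$. $T^{(3)}$ is the $T$-ideal of $k_1\langle X\rangle$ (ideal invariant under all endomorphisms) generated by $[x_1,x_2,x_3]$. For $u,v\in k_1\langle X\rangle$, $\kappa(u,v)=[u,v]u^{p-1}v^{p-1}$. Congruence modulo a subspace $U$ means the difference lies in $U$. *)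

From HB Require Import structures.
From mathcomp Require Import all_boot all_order all_algebra.
From mathcomp Require Import finmap.
From mathcomp.multinomials Require Import monalg.
Set Implicit Arguments. Unset Strict Implicit. Unset Printing Implicit Defensive.
Import Order.TTheory GRing.Theory Num.Theory.
Local Open Scope ring_scope.

(* k_1<X>: the free unitary associative k-algebra on X = {x_i | i >= 0},
   realised as the monoid algebra of the free monoid on nat. *)
Definition freealg (k : fieldType) := {malg k[{fmonom nat}]}.

Definition xvar (k : fieldType) (i : nat) : freealg k := << fmu i >>.

Definition lbr (k : fieldType) (a b : freealg k) : freealg k := a * b - b * a.
Definition lbr3 (k : fieldType) (a b c : freealg k) : freealg k :=
  lbr (lbr a b) c.

Definition is_alg_endo (k : fieldType) (phi : freealg k -> freealg k) : Prop :=
  [/\ forall a b, phi (a + b) = phi a + phi b,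
      forall (c : k) a, phi (c *: a) = c *: phi a,
      forall a b, phi (a * b) = phi a * phi b
    & phi 1 = 1].

Definition is_ideal (k : fieldType) (I : freealg k -> Prop) : Prop :=
  [/\ I 0,
      forall a b, I a -> I b -> I (a + b)
    & forall a b f, I f -> I (a * f * b)].

Definition is_T_ideal (k : fieldType) (I : freealg k -> Prop) : Prop :=
  is_ideal I /\ forall phi, is_alg_endo phi -> forall f, I f -> I (phi f).

(* T^(3): the T-ideal generated by [x_1, x_2, x_3] (smallest such) *)
Definition T3 (k : fieldType) (f : freealg k) : Prop :=
  forall I : freealg k -> Prop,
    is_T_ideal I -> I (lbr3 (xvar k 1) (xvar k 2) (xvar k 3)) -> I f.

Definition congr_mod (k : fieldType) (U : freealg k -> Prop) (a b : freealg k) :=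
  U (a - b).

Definition kappa (k : fieldType) (p : nat) (u v : freealg k) : freealg k :=
  lbr u v * u ^+ p.-1 * v ^+ p.-1.

From Stdlib Require Import Setoid Morphisms.
From HB Require Import structures.
From mathcomp Require Import all_boot all_order all_algebra.
From mathcomp Require Import finmap.
From mathcomp.multinomials Require Import monalg.
(* Modulo an ideal I containing every [[a,b],c], commutators are central and
   [a,b][a,c] lies in I, so the annihilator modulo I of a commutator
   c = [u,v+w] is a two-sided ideal containing [u,v+w] and [v,w].  Hence
   c u^(p-1) (v+w)^(p-1) is congruent to c (v+w)^(p-1) u^(p-1), and (v+w)^(p-1)
   may be expanded by the binomial theorem.  On the other side,
   [u, v^(i+1) w^(p-1-i) u^(p-1)] is congruent to
   ((i+1) [u,v] v^i w^(p-1-i) + (p-1-i) [u,w] v^(i+1) w^(p-2-i)) u^(p-1), and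
   C(p-1,i) (p-1-i)/(i+1) = C(p-1,i+1) makes both sides agree term by term. *)

Set Implicit Arguments. Unset Strict Implicit. Unset Printing Implicit Defensive.
Import GRing.Theory.
Local Open Scope ring_scope.

Definition bracket (R : nzRingType) (a b : R) : R := a * b - b * a.

Section Bracket.
Variable R : nzRingType.
Implicit Types a b c x y : R.

Lemma bracketC a b : bracket a b = - bracket b a.
Proof. by rewrite /bracket opprB. Qed.

Lemma bracketDr a b c : bracket a (b + c) = bracket a b + bracket a c.
Proof. by rewrite /bracket mulrDr mulrDl opprD addrACA. Qed.

Lemma bracketMr a x y : bracket a (x * y) = bracket a x * y + x * bracket a y.
Proof. by rewrite /bracket mulrBl mulrBr !mulrA addrA subrK. Qed.

Lemma bracketMl x y b : bracket (x * y) b = x * bracket y b + bracket x b * y.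
Proof. by rewrite /bracket mulrBl mulrBr !mulrA addrA subrK. Qed.

Lemma bracketxx a : bracket a a = 0.
Proof. by rewrite /bracket subrr. Qed.

Lemma bracket1r a : bracket a 1 = 0.
Proof. by rewrite /bracket mulr1 mul1r subrr. Qed.

Lemma bracket1l b : bracket 1 b = 0.
Proof. by rewrite /bracket mulr1 mul1r subrr. Qed.

Lemma bracketXr a n : bracket a (a ^+ n) = 0.
Proof. by rewrite /bracket -exprS -exprSr subrr. Qed.

End Bracket.

Lemma sum_natmul_binS (V : nmodType) (F : nat -> V) n :
  \sum_(0 <= j < n.+1) F j.+1 *+ 'C(n, j) + \sum_(0 <= j < n.+1) F j *+ 'C(n, j)
  = \sum_(0 <= j < n.+2) F j *+ 'C(n.+1, j).
Proof.
rewrite [in RHS]big_nat_recl // [X in _ + X]big_nat_recl //.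
rewrite [X in _ = _ + X](eq_bigr (fun j => F j.+1 *+ 'C(n, j.+1) + F j.+1 *+ 'C(n, j)));
  last by move=> j _; rewrite binS mulrnDr.
rewrite big_split /= [X in _ = _ + (X + _)]big_nat_recr //=.
rewrite (bin_small (ltnSn n)) mulr0n addr0 !bin0.
by rewrite [LHS]addrC -addrA.
Qed.

Lemma sum_nat_add_shift (V : nmodType) (F G : nat -> V) n :
  \sum_(0 <= j < n.+1) (F j + G j) = F n + G 0%N + \sum_(0 <= i < n) (F i + G i.+1).
Proof.
rewrite !big_split big_nat_recr //= big_nat_recl //=.
by rewrite [_ + F n]addrC addrACA.
Qed.

Record ideal (R : nzRingType) (J : R -> Prop) : Prop := Ideal {
  ideal0 : J 0;
  idealD : forall x y, J x -> J y -> J (x + y);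
  idealMl : forall a x, J x -> J (a * x);
  idealMr : forall b x, J x -> J (x * b) }.

Definition eqmod (R : nzRingType) (J : R -> Prop) (x y : R) : Prop := J (x - y).

Section IdealCongruence.
Variables (R : nzRingType) (J : R -> Prop).
Hypothesis idealJ : ideal J.
Implicit Types a b u v w x y : R.

Lemma idealN x : J x -> J (- x).
Proof. by move=> /(idealMl idealJ (-1)); rewrite mulN1r. Qed.

Lemma ideal_sum (T : Type) (r : seq T) (P : pred T) (F : T -> R) :
  (forall i, P i -> J (F i)) -> J (\sum_(i <- r | P i) F i).
Proof. by move=> JF; apply: big_ind => //; [apply: ideal0 | apply: idealD]. Qed.

Lemma eqmod_equivalence : Equivalence (eqmod J).
Proof.
split=> [x | x y /idealN | x y z Jxy /(idealD idealJ Jxy)].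
- by rewrite /eqmod subrr; apply: ideal0.
- by rewrite /eqmod opprB.
- by rewrite /eqmod addrA subrK.
Qed.

Lemma eqmod_add : Proper (eqmod J ==> eqmod J ==> eqmod J) +%R.
Proof.
by move=> x y Jxy x' y' /(idealD idealJ Jxy); rewrite /eqmod opprD addrACA.
Qed.

Lemma eqmod_mul : Proper (eqmod J ==> eqmod J ==> eqmod J) *%R.
Proof.
move=> x y Jxy x' y' Jxy'.
have := idealD idealJ (idealMr idealJ x' Jxy) (idealMl idealJ y Jxy').
by rewrite /eqmod mulrBl mulrBr addrA subrK.
Qed.

Lemma eqmod_natmul : Proper (eqmod J ==> eq ==> eqmod J) (@GRing.natmul R).
Proof.
move=> x y Jxy m n <-.
by rewrite /eqmod -mulrnBl -mulr_natr; apply: idealMr.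
Qed.

#[local] Existing Instances eqmod_equivalence eqmod_add eqmod_mul eqmod_natmul.

Lemma eqmod_sum_nat m n (F G : nat -> R) :
  (forall i, (m <= i < n)%N -> eqmod J (F i) (G i)) ->
  eqmod J (\sum_(m <= i < n) F i) (\sum_(m <= i < n) G i).
Proof.
move=> JFG; rewrite /eqmod -sumrB big_nat_cond.
by apply: ideal_sum => i /andP[/JFG].
Qed.

Lemma ideal_bracketXX u v m n :
  J (bracket u v) -> J (bracket (u ^+ m) (v ^+ n)).
Proof.
move=> Juv; have [J0 JD JMl JMr] := idealJ.
have Juvn : J (bracket u (v ^+ n)).
  elim: n => [|n IHn]; first by rewrite bracket1r.
  by rewrite exprSr bracketMr; apply: JD; [apply: JMr | apply: JMl].
elim: m => [|m IHm]; first by rewrite bracket1l.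
by rewrite exprSr bracketMl; apply: JD; [apply: JMl | apply: JMr].
Qed.

Lemma eqmod_exprD v w n : J (bracket w v) ->
  eqmod J ((v + w) ^+ n) (\sum_(0 <= j < n.+1) v ^+ j * w ^+ (n - j) *+ 'C(n, j)).
Proof.
move=> Jwv; elim: n => [|n IHn].
  by rewrite big_nat1 !expr0 mulr1; reflexivity.
rewrite exprSr IHn -sum_natmul_binS mulr_suml -big_split /=.
apply: eqmod_sum_nat => j /andP[_ ltjn].
have commute_v : eqmod J (v ^+ j * w ^+ (n - j) * v) (v ^+ j.+1 * w ^+ (n - j)).
  rewrite /eqmod exprSr -!mulrA -mulrBr; apply: (idealMl idealJ).
  by have := ideal_bracketXX (n - j) 1 Jwv; rewrite expr1.
rewrite mulrnAl mulrDr commute_v -mulrA -exprSr subSS subSn // mulrnDl.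
reflexivity.
Qed.

End IdealCongruence.

#[export] Existing Instances eqmod_equivalence eqmod_add eqmod_mul eqmod_natmul.

Section CentralBrackets.
Variables (R : nzRingType) (I : R -> Prop).
Hypotheses (idealI : ideal I) (bracket3I : forall a b c, I (bracket (bracket a b) c)).
#[local] Hint Resolve idealI : typeclass_instances.
Implicit Types a b c u v w x : R.

Lemma bracket_central a b x : eqmod I (bracket a b * x) (x * bracket a b).
Proof. exact: bracket3I. Qed.

Lemma bracket_mul_bracket a b c : I (bracket a b * bracket a c).
Proof.
(* [a, b a] = [a, b] a *)
have -> : bracket a b * bracket a c
          = bracket (bracket a (b * a)) c - bracket (bracket a b) c * a.
  by rewrite bracketMr bracketxx mulr0 addr0 bracketMl addrK.
by apply: (idealD idealI); [|apply: idealN; [|apply: (idealMr idealI)]].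
Qed.

Lemma ideal_bracket_ann a b : ideal (fun x => I (bracket a b * x)).
Proof.
have [I0 ID IMl IMr] := idealI.
split=> [|x y Ix Iy|c x Ix|c x Ix]; first by rewrite mulr0.
- by rewrite mulrDr; apply: ID.
- rewrite mulrA -(subrK (c * bracket a b) (bracket a b * c)) mulrDl -mulrA.
  by apply: ID; [apply: IMr; apply: bracket3I | apply: IMl].
- by rewrite mulrA; apply: IMr.
Qed.

Lemma eqmod_bracketX a b n :
  eqmod I (bracket a (b ^+ n.+1)) (bracket a b * b ^+ n *+ n.+1).
Proof.
elim: n => [|n IHn]; first by rewrite expr1 expr0 mulr1; reflexivity.
rewrite exprSr bracketMr IHn -(bracket_central a b (b ^+ n.+1)).
by rewrite mulrnAl -mulrA -exprSr -mulrSr; reflexivity.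
Qed.

Lemma eqmod_bracket_monomial u v w i m :
  eqmod I (bracket u (v ^+ i.+1 * w ^+ m.+1))
    (bracket u v * (v ^+ i * w ^+ m.+1) *+ i.+1
     + bracket u w * (v ^+ i.+1 * w ^+ m) *+ m.+1).
Proof.
rewrite bracketMr !eqmod_bracketX mulrnAl mulrnAr mulrA.
rewrite -(bracket_central u w (v ^+ i.+1)) -!mulrA; reflexivity.
Qed.

Lemma eqmod_bracket_swap u x m :
  eqmod I (bracket u x * u ^+ m * x ^+ m) (bracket u x * x ^+ m * u ^+ m).
Proof.
rewrite /eqmod -!mulrA -mulrBr.
by apply: (ideal_bracketXX (ideal_bracket_ann u x)); apply: bracket_mul_bracket.
Qed.

Lemma eqmod_bracket_exprD u v w n :
  eqmod I (bracket u (v + w) * u ^+ n * (v + w) ^+ n)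
    (\sum_(0 <= j < n.+1)
       (bracket u v + bracket u w) * (v ^+ j * w ^+ (n - j)) * u ^+ n *+ 'C(n, j)).
Proof.
set c := bracket u (v + w).
have annc := ideal_bracket_ann u (v + w).
have cwv : I (c * bracket w v).
  rewrite /c bracketDr mulrDl; apply: (idealD idealI).
    by rewrite (bracketC u v) (bracketC w v) mulrNN; apply: bracket_mul_bracket.
  by rewrite (bracketC u w) mulNr; apply: (idealN idealI); apply: bracket_mul_bracket.
have binom : eqmod I (c * (v + w) ^+ n)
                    (c * \sum_(0 <= j < n.+1) v ^+ j * w ^+ (n - j) *+ 'C(n, j)).
  by rewrite /eqmod -mulrBr; apply: (eqmod_exprD annc).
rewrite eqmod_bracket_swap binom mulr_sumr mulr_suml -bracketDr.
by under eq_bigr => j _ do rewrite mulrnAr mulrnAl; reflexivity.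
Qed.

End CentralBrackets.

Lemma eqmod_scale (k : fieldType) (A : lalgType k) (J : A -> Prop) :
  ideal J -> Proper (eq ==> eqmod J ==> eqmod J) (@GRing.scale k A).
Proof.
move=> idealJ c _ <- x y Jxy.
by rewrite /eqmod -scalerBr -mulr_algl; apply: (idealMl idealJ).
Qed.

#[export] Existing Instance eqmod_scale.

Section KappaAddition.
Variables (k : fieldType) (A : lalgType k) (I : A -> Prop).
Hypotheses (idealI : ideal I) (bracket3I : forall a b c, I (bracket (bracket a b) c)).
#[local] Hint Resolve idealI : typeclass_instances.
Variable n : nat.
Hypothesis natr_neq0 : forall m, (0 < m <= n)%N -> m%:R != 0 :> k.
Variables u v w : A.

Let term (x : A) j := bracket u x * (v ^+ j * w ^+ (n - j)) * u ^+ n *+ 'C(n, j).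

Lemma eqmod_scaled_bracket i : (i < n)%N ->
  eqmod I ((((i.+1)%:R : k)^-1 * 'C(n, i)%:R) *:
             bracket u (v ^+ i.+1 * w ^+ (n - i) * u ^+ n))
    (term v i + term w i.+1).
Proof.
move=> ltin; set a := (_ * _)%R.
have i1_neq0 : (i.+1)%:R != 0 :> k by apply: natr_neq0.
have a_i1 : a * i.+1%:R = 'C(n, i)%:R by rewrite mulrAC mulVf ?mul1r.
have a_ni : a * (n - i)%:R = 'C(n, i.+1)%:R.
  by rewrite -mulrA -natrM mulnC -mul_bin_left natrM mulKf.
rewrite bracketMr bracketXr mulr0 addr0 -(subnSK ltin).
rewrite (eqmod_bracket_monomial idealI bracket3I) (subnSK ltin).
rewrite scalerAl scalerDr -!scaler_nat !scalerA a_i1 a_ni !scaler_nat.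
by rewrite mulrDl !mulrnAl; reflexivity.
Qed.

Lemma eqmod_kappa_addr :
  eqmod I (bracket u (v + w) * u ^+ n * (v + w) ^+ n)
    (bracket u v * u ^+ n * v ^+ n + bracket u w * u ^+ n * w ^+ n
     + \sum_(0 <= i < n) (((i.+1)%:R : k)^-1 * 'C(n, i)%:R) *:
         bracket u (v ^+ i.+1 * w ^+ (n - i) * u ^+ n)).
Proof.
rewrite (eqmod_sum_nat idealI (G := fun i => term v i + term w i.+1)); last first.
  by move=> i /andP[_ ltin]; apply: eqmod_scaled_bracket.
rewrite (eqmod_bracket_exprD idealI bracket3I) !(eqmod_bracket_swap idealI bracket3I).
under eq_bigr do rewrite mulrDl mulrDl mulrnDl.
rewrite sum_nat_add_shift subnn subn0 !expr0 mulr1 mul1r binn bin0 !mulr1n.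
reflexivity.
Qed.

End KappaAddition.

Definition monom_subst (k : fieldType) (s : nat -> freealg k) (m : fmonom nat) :=
  \prod_(i <- (m : seq nat)) s i.

Lemma monom_subst_mmorphism (k : fieldType) (s : nat -> freealg k) :
  mmorphism (monom_subst s).
Proof. by split=> [m m'|]; rewrite /monom_subst ?fmM ?big_cat // fm1 big_nil. Qed.

HB.instance Definition _ (k : fieldType) (s : nat -> freealg k) :=
  isMultiplicative.Build (fmonom nat) (freealg k) (monom_subst s)
    (monom_subst_mmorphism s).

Definition subst (k : fieldType) (s : nat -> freealg k) : freealg k -> freealg k :=
  mmap (@malgC (fmonom nat) k) (monom_subst s).

Section Substitution.
Variable k : fieldType.
Implicit Types (s : nat -> freealg k) (g : freealg k).

Lemma mulr_malgC g c : g * c%:MP = c *: g.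
Proof.
rewrite malgM_def malgZ_def /malgC fgmulgU /fgscale.
by apply: eq_bigr => m _; rewrite mulm1 mulrC.
Qed.

Lemma subst_alg_endo s : is_alg_endo (subst s).
Proof.
have [substM subst1] : {morph subst s : x y / x * y} * (subst s 1 = 1).
  apply: commr_mmap_is_multiplicative => g m m'.
  by rewrite /GRing.comm mul_malgC mulr_malgC.
split=> //; first exact: raddfD.
by move=> c g; rewrite /subst mmapZ mul_malgC.
Qed.

Lemma subst_xvar s i : subst s (xvar k i) = s i.
Proof.
rewrite /subst /xvar mmapU -[X in X * _]/(1%:MP : freealg k) mpolyC1E mul1r.
by rewrite /monom_subst fmU big_seq1.
Qed.

Lemma alg_endo_lbr (phi : freealg k -> freealg k) a b :
  is_alg_endo phi -> phi (lbr a b) = lbr (phi a) (phi b).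
Proof.
case=> phiD phiZ phiM _.
by rewrite /lbr -scaleN1r phiD phiZ !phiM scaleN1r.
Qed.

Lemma T_ideal_lbr3 (I : freealg k -> Prop) :
  is_T_ideal I -> I (lbr3 (xvar k 1) (xvar k 2) (xvar k 3)) ->
  forall a b c, I (lbr3 a b c).
Proof.
move=> [_ Iendo] Ix123 a b c.
pose s i := nth 0 [:: 0; a; b; c] i.
have := Iendo _ (subst_alg_endo s) _ Ix123.
by rewrite /lbr3 !(alg_endo_lbr _ _ (subst_alg_endo s)) !subst_xvar.
Qed.

Lemma ideal_T_ideal (I : freealg k -> Prop) : is_T_ideal I -> ideal I.
Proof.
case=> [[I0 ID IM] _]; split=> // [a x|b x] /IM.
  by move/(_ a 1); rewrite mulr1.
by move/(_ 1 b); rewrite mul1r.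
Qed.

End Substitution.

Theorem lemma2p4 (k : fieldType) (p : nat) (hchar : p \in [pchar k])
    (hp2 : (2 < p)%N) (u v w : freealg k) :
  congr_mod (@T3 k)
    (kappa p u (v + w))
    (kappa p u v + kappa p u w
     + \sum_(0 <= i < p.-1)
         (((i.+1)%:R : k)^-1 * ('C(p.-1, i))%:R) *:
           lbr u (v ^+ i.+1 * w ^+ (p - i.+1) * u ^+ p.-1)).
Proof.
(* Only the invertibility of 1, ..., p - 1 in k is used. *)
case: p hchar hp2 => [/pcharf_prime //|n] hchar _ I TI Ix123.
have natr_neq0 m : (0 < m <= n)%N -> m%:R != 0 :> k.
  by case/andP=> m_gt0 le_mn; rewrite -(dvdn_pcharf hchar) gtnNdvd.
exact: (eqmod_kappa_addr (ideal_T_ideal TI) (T_ideal_lbr3 TI Ix123) natr_neq0).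
Qed.
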